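(* For every integer $m$, $G_{m-1}(\lambda)=\frac{\lambda}{1-\lambda}\,G_m'(\lambda)$ as formal power series in $\lambda$, where $G_m'$ denotes the formal derivative with respect to $\lambda$.
   Context: For an integer $m$ let $R_m(z)=\sum_{n\ge1} n^{n-m}\frac{z^n}{n!}$, a formal power series in $z$. Let $T(z)=\sum_{n\ge1}n^{n-1}\frac{z^n}{n!}$ (the tree function); it satisfies $T(z)=z e^{T(z)}$, so its compositional inverse is $z=\lambda e^{-\lambda}$. Define the formal power series $G_m(\lambda):=R_m(\lambda e^{-\lambda})$, so that $G_m(T(z))=R_m(z)$. *)

From mathcomp Require Import all_boot all_order all_algebra.
Set Implicit Arguments. Unset Strict Implicit. Unset Printing Implicit Defensive.
Import Order.TTheory GRing.Theory Num.Theory.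
Local Open Scope ring_scope.

(* formal power series: f n = coefficient of x^n *)
Definition fps := nat -> rat.

Definition fps_mul (f g : fps) : fps :=
  fun n => \sum_(i < n.+1) f i * g (n - i)%N.

Definition fps_one : fps := fun n => if n is 0%N then 1 else 0.

Fixpoint fps_pow (f : fps) (k : nat) : fps :=
  if k is k'.+1 then fps_mul f (fps_pow f k') else fps_one.

Definition fps_deriv (f : fps) : fps := fun n => n.+1%:R * f n.+1.

(* composition f(h) for h with zero constant term: since h^k has no terms of
   degree < k, the coefficient of x^n in sum_k f_k h^k is the finite sum below *)
Definition fps_comp (f h : fps) : fps :=
  fun n => \sum_(k < n.+1) f k * fps_pow h k n.

Definition Rser (m : int) : fps :=
  fun n => if n is 0%N then 0 else (n%:R : rat) ^ (n%:Z - m) / (n`!)%:R.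

(* lambda * e^{-lambda} = sum_{n>=1} (-1)^(n-1) lambda^n / (n-1)! *)
Definition lam_exp_neg_lam : fps :=
  fun n => if n is n'.+1 then (-1) ^+ n' / (n'`!)%:R else 0.

Definition Gser (m : int) : fps := fps_comp (Rser m) lam_exp_neg_lam.

Definition lam_over_one_minus_lam : fps :=
  fun n => if n is 0%N then 0 else 1.

From mathcomp Require Import all_boot all_order all_algebra.
From mathcomp Require Import ring zify.
From Stdlib Require Import FunctionalExtensionality.
Set Implicit Arguments. Unset Strict Implicit. Unset Printing Implicit Defensive.
Import Order.TTheory GRing.Theory Num.Theory.
Local Open Scope ring_scope.

(* Coefficientwise R_(m-1) = z R_m', i.e. R_(m-1) is the Euler operator z d/dz
   applied to R_m.  Under the substitution z = h(lambda) := lambda e^(-lambda)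
   the Euler operator becomes (h / h') d/dlambda, and h / h' = lambda/(1-lambda).
   Formally: if a h' = h then a (f o h)' = (z f') o h, because a (h^k)' = k h^k;
   the latter is checked on polynomial truncations, where the chain rule for
   powers is available. *)

Definition fps_trunc (N : nat) (f : fps) : {poly rat} := \poly_(i < N) f i.

Lemma coef_fps_trunc N f i : (fps_trunc N f)`_i = if (i < N)%N then f i else 0.
Proof. exact: coef_poly. Qed.

Lemma coef_fps_truncM N f g n :
  (n < N)%N -> (fps_trunc N f * fps_trunc N g)`_n = fps_mul f g n.
Proof.
move=> ltnN; rewrite coefM; apply: eq_bigr => i _.
by rewrite !coef_fps_trunc !ifT //; have := ltn_ord i; lia.
Qed.

Lemma coef_fps_truncX N f k n :
  (n < N)%N -> (fps_trunc N f ^+ k)`_n = fps_pow f k n.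
Proof.
elim: k n => [|k IHk] n ltnN; first by rewrite expr0 coef1; case: n ltnN.
rewrite exprS coefM; apply: eq_bigr => i _.
by rewrite coef_fps_trunc ifT ?IHk //; have := ltn_ord i; lia.
Qed.

Lemma fps_trunc_pow N f k :
  fps_trunc N (fps_pow f k) = take_poly N (fps_trunc N f ^+ k).
Proof.
apply/polyP => i; rewrite coef_fps_trunc coef_take_poly.
by case: ifP => // /coef_fps_truncX ->.
Qed.

Lemma deriv_fps_trunc N f : (fps_trunc N.+1 f)^`() = fps_trunc N (fps_deriv f).
Proof.
apply/polyP => i; rewrite coef_deriv !coef_fps_trunc ltnS.
by case: ifP; rewrite ?mul0rn // -mulr_natl.
Qed.

Lemma deriv_take_poly (R : nzRingType) N (p : {poly R}) :
  (take_poly N.+1 p)^`() = take_poly N p^`().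
Proof.
apply/polyP => i; rewrite coef_deriv !coef_take_poly ltnS.
by case: ifP; rewrite ?mul0rn // coef_deriv.
Qed.

Lemma coefM_take_polyr (R : nzRingType) N (p q : {poly R}) n :
  (n < N)%N -> (p * take_poly N q)`_n = (p * q)`_n.
Proof.
move=> ltnN; rewrite !coefM; apply: eq_bigr => i _.
by rewrite coef_take_poly ifT //; have := ltn_ord i; lia.
Qed.

Lemma fps_pow_eq0 f k n : f 0%N = 0 -> (n < k)%N -> fps_pow f k n = 0.
Proof.
move=> f0; elim: k n => [|k IHk] n // ltnk /=.
rewrite /fps_mul big1 // => i _.
case: (posnP i) => [->|i_gt0]; first by rewrite f0 mul0r.
by rewrite IHk ?mulr0 //; have := ltn_ord i; lia.
Qed.

Lemma fps_compE f h N n : h 0%N = 0 -> (n < N)%N ->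
  fps_comp f h n = \sum_(k < N) f k * fps_pow h k n.
Proof.
move=> h0 ltnN; rewrite /fps_comp.
rewrite (big_ord_widen N (fun k => f k * fps_pow h k n) ltnN) big_mkcond /=; apply: eq_bigr => k _.
by case: ltnP => // lenk; rewrite fps_pow_eq0 ?mulr0.
Qed.

Lemma fps_mul_deriv_pow a f k n : fps_mul a (fps_deriv f) = f ->
  fps_mul a (fps_deriv (fps_pow f k)) n = k%:R * fps_pow f k n.
Proof.
move=> Ef.
set l := fps_trunc n.+1 a; set p := fps_trunc n.+2 f.
have Elp : take_poly n.+1 (l * p^`()) = take_poly n.+1 p.
  apply/polyP => i; rewrite !coef_take_poly; case: ifP => // lti.
  rewrite deriv_fps_trunc coef_fps_truncM // Ef coef_fps_trunc ifT //; lia.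
rewrite -(coef_fps_truncM _ _ (ltnSn n)) -deriv_fps_trunc fps_trunc_pow.
rewrite deriv_take_poly coefM_take_polyr // deriv_exp -/l -/p.
rewrite mulrnAr coefMn mulrA mulrC -(coefM_take_polyr _ _ (ltnSn n)) Elp.
rewrite coefM_take_polyr // mulr_natl; case: k => [|k] //.
by rewrite -exprSr coef_fps_truncX.
Qed.

Lemma fps_mul_deriv_comp a f h : h 0%N = 0 -> fps_mul a (fps_deriv h) = h ->
  fps_mul a (fps_deriv (fps_comp f h)) = fps_comp (fun k => k%:R * f k) h.
Proof.
move=> h0 Eh; apply: functional_extensionality => n.
transitivity (\sum_(i < n.+1) \sum_(k < n.+2)
    f k * (a i * ((n - i).+1%:R * fps_pow h k (n - i).+1))).
  apply: eq_bigr => i _.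
  rewrite /fps_deriv (fps_compE _ (N := n.+2) h0) ?ltnS ?leq_subr //.
  by rewrite !mulr_sumr; apply: eq_bigr => k _; ring.
rewrite exchange_big [RHS](fps_compE _ (N := n.+2) h0) //; apply: eq_bigr => k _.
rewrite -mulr_sumr -[\sum_i _]/(fps_mul a (fps_deriv (fps_pow h k)) n).
by rewrite fps_mul_deriv_pow // mulrCA mulrA.
Qed.

Lemma fps_mul_lam_over_one_minus_lamS g j :
  fps_mul lam_over_one_minus_lam g j.+1 = \sum_(i < j.+1) g i.
Proof.
rewrite /fps_mul big_ord_recl mul0r add0r (reindex_inj rev_ord_inj) /=.
apply: eq_bigr => i _; rewrite mul1r.
by congr g; have := ltn_ord i; rewrite /bump; lia.
Qed.

Lemma lam_exp_neg_lamS j :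
  lam_exp_neg_lam j.+1 = \sum_(i < j.+1) fps_deriv lam_exp_neg_lam i.
Proof.
elim: j => [|j IHj]; first by rewrite big_ord1 /fps_deriv /= mul1r.
rewrite big_ord_recr -IHj /fps_deriv /= !factS !natrM exprS.
have jfact_neq0 : (j`!)%:R != 0 :> rat by rewrite pnatr_eq0 -lt0n fact_gt0.
rewrite -[(j.+2)%:R]natr1; field.
by rewrite jfact_neq0 addrC natr1 pnatr_eq0.
Qed.

Lemma fps_mul_deriv_lam_exp_neg_lam :
  fps_mul lam_over_one_minus_lam (fps_deriv lam_exp_neg_lam) = lam_exp_neg_lam.
Proof.
apply: functional_extensionality => -[|j]; first by rewrite /fps_mul big_ord1 mul0r.
by rewrite fps_mul_lam_over_one_minus_lamS lam_exp_neg_lamS.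
Qed.

Lemma Rser_subr1 m k : Rser (m - 1) k = k%:R * Rser m k.
Proof.
case: k => [|k] /=; first by rewrite mulr0.
have -> : (Posz k.+1 - (m - 1))%R = (Posz k.+1 - m) + 1 by ring.
by rewrite exprzDr ?expr1z ?unitfE ?pnatr_eq0 //; ring.
Qed.

Theorem corollary1 (m : int) :
  Gser (m - 1) = fps_mul lam_over_one_minus_lam (fps_deriv (Gser m)).
Proof.
rewrite /Gser fps_mul_deriv_comp //; last exact: fps_mul_deriv_lam_exp_neg_lam.
by congr fps_comp; apply: functional_extensionality => k; exact: Rser_subr1.
Qed.
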